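(* If a quadrilateral $q$ is $\frac{\pi}{12}$-near square and has a right angle adjacent to an acute angle, then $q$ has a periodic billiard path.
   Context: A quadrilateral is cut by a diagonal into two triangles. Its parameters $(a_1,a_2,a_3,a_4)$ are the four angles that the diagonal makes with the four sides (the angles of the two triangles at the endpoints of the diagonal). For $\varepsilon>0$, the quadrilateral is $\varepsilon$-near square if $|a_i-\pi/4|<\varepsilon$ for all $i$. A billiard path is a straight-line trajectory inside the polygon that reflects off the sides with angle of incidence equal to angle of reflection. Trajectories hitting vertices are excluded. It is periodic if it repeats itself. *)

From Stdlib Require Import Reals Lra Lia.
Open Scope R_scope.

Definition pt := (R * R)%type.

Definition vsub (p q : pt) : pt := (fst p - fst q, snd p - snd q).
Definition vadd (p q : pt) : pt := (fst p + fst q, snd p + snd q).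
Definition vscale (c : R) (p : pt) : pt := (c * fst p, c * snd p).
Definition dot (u v : pt) : R := fst u * fst v + snd u * snd v.
Definition cross (u v : pt) : R := fst u * snd v - snd u * fst v.
Definition vnorm (u : pt) : R := sqrt (dot u u).

Definition angle (u v : pt) : R := acos (dot u v / (vnorm u * vnorm v)).

(* A quadrilateral ABCD cut by the diagonal AC into the two triangles ABC and
   ACD: B and D lie strictly on opposite sides of the line AC. *)
Record quad := Quad { qA : pt; qB : pt; qC : pt; qD : pt }.

Definition is_quadrilateral (q : quad) : Prop :=
  cross (vsub (qC q) (qA q)) (vsub (qB q) (qA q)) *
  cross (vsub (qC q) (qA q)) (vsub (qD q) (qA q)) < 0.

Definition param1 (q : quad) : R := angle (vsub (qC q) (qA q)) (vsub (qB q) (qA q)).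
Definition param2 (q : quad) : R := angle (vsub (qC q) (qA q)) (vsub (qD q) (qA q)).
Definition param3 (q : quad) : R := angle (vsub (qA q) (qC q)) (vsub (qB q) (qC q)).
Definition param4 (q : quad) : R := angle (vsub (qA q) (qC q)) (vsub (qD q) (qC q)).

Definition near_square (eps : R) (q : quad) : Prop :=
  Rabs (param1 q - PI / 4) < eps /\ Rabs (param2 q - PI / 4) < eps /\
  Rabs (param3 q - PI / 4) < eps /\ Rabs (param4 q - PI / 4) < eps.

Definition vtx (q : quad) (k : nat) : pt :=
  match (k mod 4)%nat with
  | 0%nat => qA q | 1%nat => qB q | 2%nat => qC q | _ => qD q
  end.

(* interior angle of the quadrilateral at vertex k *)
Definition vangle (q : quad) (k : nat) : R :=
  match (k mod 4)%nat with
  | 0%nat => param1 q + param2 q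
  | 2%nat => param3 q + param4 q
  | _ => angle (vsub (vtx q (k + 3)) (vtx q k)) (vsub (vtx q (k + 1)) (vtx q k))
  end.

Definition right_adj_acute (q : quad) : Prop :=
  exists k : nat, (k < 4)%nat /\ vangle q k = PI / 2 /\
    (vangle q (k + 1) < PI / 2 \/ vangle q (k + 3) < PI / 2).

Definition in_open_triangle (X Y Z P : pt) : Prop :=
  (0 < cross (vsub Y X) (vsub P X) /\ 0 < cross (vsub Z Y) (vsub P Y) /\
   0 < cross (vsub X Z) (vsub P Z)) \/
  (cross (vsub Y X) (vsub P X) < 0 /\ cross (vsub Z Y) (vsub P Y) < 0 /\
   cross (vsub X Z) (vsub P Z) < 0).

Definition in_open_segment (X Y P : pt) : Prop :=
  exists t, 0 < t < 1 /\ P = vadd X (vscale t (vsub Y X)).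

Definition in_interior (q : quad) (P : pt) : Prop :=
  in_open_triangle (qA q) (qB q) (qC q) P \/
  in_open_triangle (qA q) (qC q) (qD q) P \/
  in_open_segment (qA q) (qC q) P.

Definition reflect (e v : pt) : pt :=
  vsub (vscale (2 * dot v e / dot e e) e) v.

(* A periodic billiard path: a periodic sequence of bounce points p i, p i lying
   in the relative interior of side s i (from vertex s i to vertex s i + 1,
   so no vertex is ever hit), consecutive bounce points joined by segments
   lying in the interior of q, and the law of reflection at every bounce. *)
Definition periodic_billiard_path (q : quad) (n : nat) (p : nat -> pt) (s : nat -> nat) : Prop :=
  (1 <= n)%nat /\
  (forall i, p (i + n)%nat = p i /\ s (i + n)%nat = s i) /\
  (forall i, (s i < 4)%nat /\ in_open_segment (vtx q (s i)) (vtx q (s i + 1)) (p i)) /\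
  (forall i t, 0 < t < 1 ->
     in_interior q (vadd (p i) (vscale t (vsub (p (S i)) (p i))))) /\
  (forall i, exists c, 0 < c /\
     vsub (p (S (S i))) (p (S i)) =
     vscale c (reflect (vsub (vtx q (s (S i) + 1)) (vtx q (s (S i))))
                       (vsub (p (S i)) (p i)))).

Definition has_periodic_billiard_path (q : quad) : Prop :=
  exists n p s, periodic_billiard_path q n p s.

(* Let the angle at P1 be right and the angle at its neighbour P0 acute; let P2
   be the other neighbour of P1 and P3 that of P0.  A ray leaving the side P0P3
   perpendicularly close to P0 bounces off P0P1 and then off P1P2.  Reflections
   in two perpendicular mirrors reverse every direction, so the ray comes back to
   P0P3 perpendicularly and then retraces itself: a periodic orbit with six
   bounces.  Its bounce points lie inside the sides as soon as P0P3 has a positive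
   component along P1P2 and the foot of the perpendicular from P1 to the line
   P0P3 lies before P3.  After a similarity taking the diagonal AC to [0, 1],
   these conditions and the convexity of the quadrilateral become polynomial
   inequalities in the coordinates of B and D, which follow from the PI/12
   bounds. *)

From Stdlib Require Import Reals Lra Lia Psatz List.
Import ListNotations.
Open Scope R_scope.

Definition rot90 (u : pt) : pt := (- snd u, fst u).

Lemma lagrange_identity u v :
  dot u u * dot v v = dot u v * dot u v + cross u v * cross u v.
Proof. destruct u, v; unfold dot, cross; simpl; ring. Qed.

Lemma lagrange_identity3 u v w :
  dot u u * dot v w = dot u v * dot u w + cross u v * cross u w.
Proof. destruct u, v, w; unfold dot, cross; simpl; ring. Qed.

Lemma dot_self_nonneg u : 0 <= dot u u.
Proof. destruct u; unfold dot; simpl; nra. Qed.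

Lemma dot_self_pos u : u <> (0, 0) -> 0 < dot u u.
Proof.
  destruct u as [x y]; unfold dot; simpl; intros Hu.
  destruct (dot_self_nonneg (x, y)) as [H | H]; [exact H |].
  unfold dot in H; simpl in H. exfalso. apply Hu.
  assert (x = 0) as -> by nra. assert (y = 0) as -> by nra. reflexivity.
Qed.

Lemma cross_self e : cross e e = 0.
Proof. destruct e; unfold cross; simpl; ring. Qed.

Lemma cross_vsub_self e P : cross e (vsub P P) = 0.
Proof. destruct e, P; unfold cross, vsub; simpl; ring. Qed.

Lemma vadd_vsub P Q : vadd Q (vsub P Q) = P.
Proof. destruct P, Q; unfold vadd, vsub; simpl; f_equal; ring. Qed.

Lemma vnorm_sq u : vnorm u * vnorm u = dot u u.
Proof. apply sqrt_sqrt, dot_self_nonneg. Qed.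

Lemma vnorm_pos u : 0 < dot u u -> 0 < vnorm u.
Proof. apply sqrt_lt_R0. Qed.

Lemma vdecomp u w : 0 < dot u u ->
  w = vadd (vscale (dot u w / dot u u) u) (vscale (cross u w / dot u u) (rot90 u)).
Proof.
  destruct u, w; unfold dot, cross, vadd, vscale, rot90; simpl; intros.
  f_equal; field; lra.
Qed.

Lemma perp_rot90 a p : 0 < dot a a -> dot a p = 0 ->
  p = vscale (cross a p / dot a a) (rot90 a).
Proof.
  intros Ha Hp. rewrite (vdecomp a p Ha) at 1. rewrite Hp.
  destruct a, p; unfold vadd, vscale, rot90; simpl; f_equal; unfold Rdiv; ring.
Qed.

Lemma on_line_of_cross0 A C P : 0 < dot (vsub C A) (vsub C A) ->
  cross (vsub C A) (vsub P A) = 0 ->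
  P = vadd A (vscale (dot (vsub C A) (vsub P A) / dot (vsub C A) (vsub C A)) (vsub C A)).
Proof.
  intros Hu Hc. pose proof (vdecomp (vsub C A) (vsub P A) Hu) as Hd.
  rewrite Hc in Hd. unfold Rdiv at 2 in Hd. rewrite Rmult_0_l in Hd.
  destruct A, C, P; unfold vsub, vadd, vscale in *; simpl in *.
  injection Hd. intros. f_equal; lra.
Qed.

Lemma in_open_segment_sym U V P : in_open_segment U V P -> in_open_segment V U P.
Proof.
  intros (t & Ht & ->). exists (1 - t). split; [lra |].
  destruct U, V; unfold vadd, vscale, vsub; simpl; f_equal; ring.
Qed.

Lemma div_lt_1 a b : 0 < b -> a < b -> a / b < 1.
Proof.
  intros Hb Hab. apply Rmult_lt_reg_r with b; [exact Hb |].
  unfold Rdiv. rewrite Rmult_assoc, Rinv_l by lra. lra.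
Qed.

Lemma cos_angle u v : 0 < dot u u -> 0 < dot v v ->
  cos (angle u v) * (vnorm u * vnorm v) = dot u v.
Proof.
  intros Hu Hv.
  pose proof (vnorm_pos u Hu). pose proof (vnorm_pos v Hv).
  pose proof (vnorm_sq u). pose proof (vnorm_sq v). pose proof (lagrange_identity u v).
  assert (Hn : 0 < vnorm u * vnorm v) by nra.
  set (c := dot u v / (vnorm u * vnorm v)).
  assert (Hd : dot u v = c * (vnorm u * vnorm v)) by (unfold c; field; lra).
  assert (Hc2 : c * c <= 1).
  { apply Rmult_le_reg_r with ((vnorm u * vnorm v) * (vnorm u * vnorm v)); nra. }
  assert (Hc : -1 <= c <= 1) by nra.
  unfold angle. fold c. rewrite cos_acos by exact Hc. lra.
Qed.

Lemma angle_bounds u v : 0 <= angle u v <= PI.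
Proof. apply acos_bound. Qed.

Lemma sin_angle u v : 0 < dot u u -> 0 < dot v v ->
  sin (angle u v) * (vnorm u * vnorm v) = Rabs (cross u v).
Proof.
  intros Hu Hv.
  pose proof (vnorm_pos u Hu). pose proof (vnorm_pos v Hv).
  pose proof (angle_bounds u v) as [Hlo Hhi].
  pose proof (sin_ge_0 _ Hlo Hhi) as Hs.
  apply Rsqr_inj; [apply Rmult_le_pos; [exact Hs | nra] | apply Rabs_pos |].
  rewrite <- Rsqr_abs. unfold Rsqr.
  pose proof (sin2_cos2 (angle u v)) as Hsc. unfold Rsqr in Hsc.
  pose proof (cos_angle u v Hu Hv) as Hc.
  pose proof (lagrange_identity u v) as Hl.
  rewrite <- (vnorm_sq u), <- (vnorm_sq v), <- Hc in Hl.
  nra.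
Qed.

Lemma cos_angle_add u v w : 0 < dot u u -> 0 < dot v v -> 0 < dot w w ->
  cross u v * cross u w <= 0 ->
  cos (angle u v + angle u w) * (vnorm v * vnorm w) = dot v w.
Proof.
  intros Hu Hv Hw Hx.
  apply Rmult_eq_reg_l with (dot u u); [| lra].
  rewrite lagrange_identity3, cos_plus, <- (cos_angle u v), <- (cos_angle u w) by assumption.
  replace (cross u v * cross u w) with (- (Rabs (cross u v) * Rabs (cross u w)))
    by (rewrite <- Rabs_mult, Rabs_left1; lra).
  rewrite <- (sin_angle u v), <- (sin_angle u w), <- (vnorm_sq u) by assumption.
  ring.
Qed.

Lemma dot_eq0_of_cos_PI2 t u v :
  cos t * (vnorm u * vnorm v) = dot u v -> t = PI / 2 -> dot u v = 0.
Proof. intros Hc ->. rewrite cos_PI2 in Hc. lra. Qed.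

Lemma dot_pos_of_cos_acute t u v : 0 < dot u u -> 0 < dot v v ->
  cos t * (vnorm u * vnorm v) = dot u v -> 0 <= t < PI / 2 -> 0 < dot u v.
Proof.
  intros Hu Hv Hc Ht.
  pose proof (vnorm_pos u Hu). pose proof (vnorm_pos v Hv).
  assert (0 < cos t) by (apply cos_gt_0; lra).
  rewrite <- Hc. apply Rmult_lt_0_compat; nra.
Qed.

Lemma dot_eq0_of_right_angle u v : 0 < dot u u -> 0 < dot v v ->
  angle u v = PI / 2 -> dot u v = 0.
Proof. intros Hu Hv. apply dot_eq0_of_cos_PI2. apply cos_angle; assumption. Qed.

Lemma dot_pos_of_acute_angle u v : 0 < dot u u -> 0 < dot v v ->
  angle u v < PI / 2 -> 0 < dot u v.
Proof.
  intros Hu Hv Ha. apply (dot_pos_of_cos_acute (angle u v)); try assumption.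
  - apply cos_angle; assumption.
  - split; [apply angle_bounds | exact Ha].
Qed.

Lemma dot_eq0_of_right_angle_sum u v w : 0 < dot u u -> 0 < dot v v -> 0 < dot w w ->
  cross u v * cross u w <= 0 -> angle u v + angle u w = PI / 2 -> dot v w = 0.
Proof. intros Hu Hv Hw Hx. apply dot_eq0_of_cos_PI2. apply cos_angle_add; assumption. Qed.

Lemma dot_pos_of_acute_angle_sum u v w : 0 < dot u u -> 0 < dot v v -> 0 < dot w w ->
  cross u v * cross u w <= 0 -> angle u v + angle u w < PI / 2 -> 0 < dot v w.
Proof.
  intros Hu Hv Hw Hx Ha. apply (dot_pos_of_cos_acute (angle u v + angle u w)); try assumption.
  - apply cos_angle_add; assumption.
  - pose proof (angle_bounds u v). pose proof (angle_bounds u w). lra.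
Qed.

(* The unoriented angle between (x, y) and the positive x-axis lies in
   (PI/6, PI/3), i.e. within PI/12 of a diagonal. *)
Definition near_diagonal (x y : R) : Prop :=
  0 < x /\ y * y < 3 * (x * x) /\ x * x < 3 * (y * y).

Lemma near_diagonal_of_angle u v : 0 < dot u u -> 0 < dot v v ->
  Rabs (angle u v - PI / 4) < PI / 12 -> near_diagonal (dot u v) (cross u v).
Proof.
  intros Hu Hv Ha. apply Rabs_def2 in Ha.
  pose proof (angle_bounds u v). pose proof PI_RGT_0.
  assert (Hlo : cos (PI / 3) < cos (angle u v)) by (apply cos_decreasing_1; lra).
  assert (Hhi : cos (angle u v) < cos (PI / 6)) by (apply cos_decreasing_1; lra).
  rewrite cos_PI3 in Hlo. rewrite cos_PI6 in Hhi.
  assert (Hs3 : sqrt 3 * sqrt 3 = 3) by (apply sqrt_sqrt; lra).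
  pose proof (cos_angle u v Hu Hv) as Hc.
  pose proof (lagrange_identity u v) as Hl.
  rewrite <- (vnorm_sq u), <- (vnorm_sq v) in Hl.
  assert (Hn : 0 < vnorm u * vnorm v)
    by (apply Rmult_lt_0_compat; apply vnorm_pos; assumption).
  set (c := cos (angle u v)) in *.
  set (n := vnorm u * vnorm v) in *.
  assert (Hs3p : 0 < sqrt 3) by (apply sqrt_lt_R0; lra).
  assert (Hc2 : 1 / 4 < c * c < 3 / 4) by (split; nra).
  assert (Hl' : n * n = dot u v * dot u v + cross u v * cross u v) by (unfold n; lra).
  rewrite <- Hc in Hl' |- *.
  assert (0 < (c * c - 1 / 4) * (n * n)) by (apply Rmult_lt_0_compat; nra).
  assert (0 < (3 / 4 - c * c) * (n * n)) by (apply Rmult_lt_0_compat; nra).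
  unfold near_diagonal. split; [| split]; nra.
Qed.

Lemma near_diagonal_eq x y x' y' :
  near_diagonal x y -> x = x' -> y * y = y' * y' -> near_diagonal x' y'.
Proof. intros H <- Hy. unfold near_diagonal in *. rewrite <- Hy. exact H. Qed.

(** * Similarities *)

Definition lin (u v a : pt) : pt := vadd (vscale (fst a) u) (vscale (snd a) v).
Definition sim (O u v P : pt) : pt := vadd O (lin u v P).
Definition qmap (f : pt -> pt) (q : quad) : quad :=
  Quad (f (qA q)) (f (qB q)) (f (qC q)) (f (qD q)).

Lemma vtx_qmap f q k : vtx (qmap f q) k = f (vtx q k).
Proof. unfold vtx; destruct (k mod 4)%nat as [|[|[|]]]; reflexivity. Qed.

Lemma vsub_sim O u v P Q : vsub (sim O u v P) (sim O u v Q) = lin u v (vsub P Q).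
Proof. destruct O, u, v, P, Q; unfold sim, lin, vsub, vadd, vscale; simpl; f_equal; ring. Qed.

Lemma sim_affine O u v X Y t :
  sim O u v (vadd X (vscale t (vsub Y X))) =
  vadd (sim O u v X) (vscale t (vsub (sim O u v Y) (sim O u v X))).
Proof. destruct O, u, v, X, Y; unfold sim, lin, vsub, vadd, vscale; simpl; f_equal; ring. Qed.

Lemma lin_vscale u v c a : lin u v (vscale c a) = vscale c (lin u v a).
Proof. destruct u, v, a; unfold lin, vadd, vscale; simpl; f_equal; ring. Qed.

Lemma lin_vsub u v a b : lin u v (vsub a b) = vsub (lin u v a) (lin u v b).
Proof. destruct u, v, a, b; unfold lin, vsub, vadd, vscale; simpl; f_equal; ring. Qed.

Lemma cross_lin u v a b : cross (lin u v a) (lin u v b) = cross u v * cross a b.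
Proof. destruct u, v, a, b; unfold lin, cross, vadd, vscale; simpl; ring. Qed.

Lemma dot_lin u v a b : dot u v = 0 -> dot v v = dot u u ->
  dot (lin u v a) (lin u v b) = dot u u * dot a b.
Proof.
  destruct u as [u1 u2], v as [v1 v2], a as [a1 a2], b as [b1 b2].
  unfold lin, dot, vadd, vscale; simpl. intros Huv Hvv.
  transitivity ((u1 * u1 + u2 * u2) * (a1 * b1) + (v1 * v1 + v2 * v2) * (a2 * b2)
                + (u1 * v1 + u2 * v2) * (a1 * b2 + a2 * b1)); [ring |].
  rewrite Huv, Hvv. ring.
Qed.

Section Similarity.

Variables O u v : pt.
Hypothesis u_perp_v : dot u v = 0.
Hypothesis v_norm : dot v v = dot u u.
Hypothesis u_nonzero : 0 < dot u u.

Lemma cross_uv_nonzero : cross u v <> 0.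
Proof.
  pose proof (lagrange_identity u v). rewrite u_perp_v, v_norm in *. nra.
Qed.

Lemma reflect_lin e a : reflect (lin u v e) (lin u v a) = lin u v (reflect e a).
Proof.
  unfold reflect. rewrite lin_vsub, lin_vscale, !dot_lin by assumption.
  replace (2 * (dot u u * dot a e)) with (dot u u * (2 * dot a e)) by ring.
  rewrite Rdiv_mult_l_l by lra. reflexivity.
Qed.

Lemma vnorm_lin a : vnorm (lin u v a) = sqrt (dot u u) * vnorm a.
Proof. unfold vnorm. rewrite dot_lin by assumption. apply sqrt_mult_alt. lra. Qed.

Lemma angle_lin a b : angle (lin u v a) (lin u v b) = angle a b.
Proof.
  unfold angle. rewrite !vnorm_lin, dot_lin by assumption. f_equal.
  assert (Hk : sqrt (dot u u) * sqrt (dot u u) = dot u u) by (apply sqrt_sqrt; lra).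
  replace (sqrt (dot u u) * vnorm a * (sqrt (dot u u) * vnorm b))
    with (sqrt (dot u u) * sqrt (dot u u) * (vnorm a * vnorm b)) by ring.
  rewrite Hk. apply Rdiv_mult_l_l. lra.
Qed.

Lemma in_open_segment_sim X Y P :
  in_open_segment X Y P -> in_open_segment (sim O u v X) (sim O u v Y) (sim O u v P).
Proof. intros (t & Ht & ->). exists t. split; [exact Ht | apply sim_affine]. Qed.

Lemma in_open_triangle_sim X Y Z P :
  in_open_triangle X Y Z P ->
  in_open_triangle (sim O u v X) (sim O u v Y) (sim O u v Z) (sim O u v P).
Proof.
  unfold in_open_triangle. rewrite !vsub_sim, !cross_lin.
  destruct (Rdichotomy _ _ cross_uv_nonzero) as [Hc | Hc];
    intros [(H1 & H2 & H3) | (H1 & H2 & H3)];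
    [right | left | left | right]; repeat split; nra.
Qed.

Lemma in_interior_sim q P : in_interior q P -> in_interior (qmap (sim O u v) q) (sim O u v P).
Proof.
  destruct q; unfold in_interior; simpl.
  intros [H | [H | H]]; auto using in_open_triangle_sim, in_open_segment_sim.
Qed.

Lemma billiard_sim q :
  has_periodic_billiard_path q -> has_periodic_billiard_path (qmap (sim O u v) q).
Proof.
  intros (n & p & s & Hn & Hper & Hside & Hchord & Hrefl).
  exists n, (fun i => sim O u v (p i)), s. split; [| split; [| split; [| split]]].
  - exact Hn.
  - intro i. destruct (Hper i) as [-> ->]. auto.
  - intro i. destruct (Hside i) as [Hs Hseg]. rewrite !vtx_qmap.
    auto using in_open_segment_sim.
  - intros i t Ht. rewrite <- sim_affine. auto using in_interior_sim.
  - intro i. destruct (Hrefl i) as (c & Hc & Hr). exists c. split; [exact Hc |].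
    rewrite !vtx_qmap, !vsub_sim, Hr, lin_vscale, reflect_lin. reflexivity.
Qed.

Lemma near_square_sim eps q : near_square eps (qmap (sim O u v) q) -> near_square eps q.
Proof.
  destruct q. unfold near_square, param1, param2, param3, param4; simpl.
  rewrite !vsub_sim, !angle_lin. auto.
Qed.

Lemma vangle_sim q k : vangle (qmap (sim O u v) q) k = vangle q k.
Proof.
  destruct q. unfold vangle, param1, param2, param3, param4.
  rewrite !vtx_qmap. simpl. rewrite !vsub_sim, !angle_lin. reflexivity.
Qed.

Lemma right_adj_acute_sim q : right_adj_acute (qmap (sim O u v) q) -> right_adj_acute q.
Proof.
  intros (k & Hk & Hr & Ha). exists k. rewrite !vangle_sim in *. auto.
Qed.

End Similarity.

Definition frame (O u : pt) (sg : R) (P : pt) : pt :=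
  (dot u (vsub P O) / dot u u, sg * cross u (vsub P O) / dot u u).

Definition nquad (b d : pt) : quad := Quad (0, 0) b (1, 0) d.

Lemma sim_frame O u sg P : sg = 1 \/ sg = -1 -> 0 < dot u u ->
  sim O u (vscale sg (rot90 u)) (frame O u sg P) = P.
Proof.
  intros Hsg Hu. revert Hu.
  destruct O, u, P; unfold sim, lin, frame, rot90, dot, cross, vsub, vadd, vscale; simpl.
  intros Hu. destruct Hsg as [-> | ->]; f_equal; field; lra.
Qed.

Lemma quad_normal_form q : is_quadrilateral q ->
  exists O u v b d, dot u v = 0 /\ dot v v = dot u u /\ 0 < dot u u /\
    snd b < 0 < snd d /\ q = qmap (sim O u v) (nquad b d).
Proof.
  destruct q as [A B C D]; unfold is_quadrilateral; simpl; intro Hq.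
  set (u := vsub C A) in Hq.
  set (cB := cross u (vsub B A)) in Hq. set (cD := cross u (vsub D A)) in Hq.
  assert (Hu : 0 < dot u u).
  { destruct (dot_self_nonneg u) as [Hu | Hu]; [exact Hu |].
    pose proof (lagrange_identity u (vsub D A)) as Hl. fold cD in Hl.
    rewrite <- Hu, Rmult_0_l in Hl.
    assert (cD = 0) as Hc by nra. rewrite Hc in Hq. lra. }
  assert (Hsg : exists sg, (sg = 1 \/ sg = -1) /\ 0 < sg * cD).
  { destruct (Rlt_or_le 0 cD) as [HcD | [HcD | HcD]].
    - exists 1. split; [left; reflexivity | lra].
    - exists (-1). split; [right; reflexivity | lra].
    - rewrite HcD, Rmult_0_r in Hq. lra. }
  destruct Hsg as (sg & Hsg & HD).
  exists A, u, (vscale sg (rot90 u)), (frame A u sg B), (frame A u sg D).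
  assert (Hsg2 : sg * sg = 1) by (destruct Hsg as [-> | ->]; ring).
  split; [| split; [| split; [| split; [split |]]]].
  - destruct u; unfold dot, rot90, vscale; simpl; ring.
  - destruct u as [u1 u2]; unfold dot, rot90, vscale in *; simpl in *.
    transitivity ((sg * sg) * (u1 * u1 + u2 * u2)); [ring | rewrite Hsg2; ring].
  - exact Hu.
  - unfold frame; simpl. fold cB.
    assert (Hprod : (sg * cB) * (sg * cD) < 0)
      by (replace ((sg * cB) * (sg * cD)) with ((sg * sg) * (cB * cD)) by ring;
          rewrite Hsg2; lra).
    assert (0 < / dot u u) by (apply Rinv_0_lt_compat; exact Hu).
    unfold Rdiv. nra.
  - unfold frame; simpl. fold cD. apply Rdiv_lt_0_compat; assumption.
  - unfold qmap, nquad; simpl. rewrite !sim_frame by assumption.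
    unfold u. destruct A, C; unfold sim, lin, rot90, vsub, vadd, vscale; simpl.
    f_equal; f_equal; ring.
Qed.

(** * The orbit at a right corner *)

Lemma reflect_opp_axis U V w : reflect (vsub U V) w = reflect (vsub V U) w.
Proof.
  destruct U as [u1 u2], V as [v1 v2], w; unfold reflect, vsub, vscale, dot; simpl.
  replace ((v1 - u1) * (v1 - u1) + (v2 - u2) * (v2 - u2))
    with ((u1 - v1) * (u1 - v1) + (u2 - v2) * (u2 - v2)) by ring.
  f_equal; unfold Rdiv; ring.
Qed.

Lemma reflect_law_perp e P Q : dot (vsub Q P) e = 0 ->
  vsub P Q = vscale 1 (reflect e (vsub Q P)).
Proof.
  intros H. unfold reflect. rewrite H.
  destruct e, P, Q; unfold vsub, vscale; simpl; f_equal; unfold Rdiv; ring.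
Qed.

Lemma reflect_law_reverse e P Q R c : 0 < c ->
  vsub R Q = vscale c (reflect e (vsub Q P)) ->
  vsub P Q = vscale (1 / c) (reflect e (vsub Q R)).
Proof.
  destruct e as [e1 e2], P as [p1 p2], Q as [q1 q2], R as [r1 r2].
  unfold reflect, vsub, vscale, dot; simpl. intros Hc H.
  injection H as H1 H2.
  set (k := 2 * ((q1 - p1) * e1 + (q2 - p2) * e2) / (e1 * e1 + e2 * e2)) in H1, H2.
  replace r1 with (q1 + c * (k * e1 - (q1 - p1))) by lra.
  replace r2 with (q2 + c * (k * e2 - (q2 - p2))) by lra.
  unfold k. destruct (Req_dec (e1 * e1 + e2 * e2) 0) as [He | He].
  - assert (e1 = 0 /\ e2 = 0) as [-> ->] by (clear - He; split; nra).
    f_equal; unfold Rdiv; ring_simplify; field; lra.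
  - f_equal; field; lra.
Qed.

Definition corner_orbit (P0 P1 P2 P3 X Y Z W : pt) : Prop :=
  in_open_segment P0 P3 X /\ in_open_segment P0 P1 Y /\
  in_open_segment P1 P2 Z /\ in_open_segment P0 P3 W /\
  dot (vsub Y X) (vsub P3 P0) = 0 /\ dot (vsub W Z) (vsub P3 P0) = 0 /\
  (exists c, 0 < c /\ vsub Z Y = vscale c (reflect (vsub P1 P0) (vsub Y X))) /\
  (exists c, 0 < c /\ vsub W Z = vscale c (reflect (vsub P2 P1) (vsub Z Y))).

Lemma corner_orbit_of_small_param P1 a e lam y :
  let k := - dot a e in
  let r := cross a e in
  0 < dot a a -> 0 < k -> 0 < lam * r -> 0 < dot e e - k -> 0 < y < 1 ->
  y * k < lam * r -> y * k < dot e e - k -> y * (k * k) < r * r ->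
  exists X Y Z W, corner_orbit (vadd P1 a) P1 (vadd P1 (vscale lam (rot90 a)))
                               (vadd (vadd P1 a) e) X Y Z W.
Proof.
  intros k r HA Hk Hm Hn Hy Hym Hyn Hyr.
  set (A := dot a a) in *. set (E := dot e e) in *. set (m := lam * r) in *.
  assert (HE : 0 < E) by lra.
  assert (Hlag : A * E = k * k + r * r)
    by (unfold A, E, k, r; rewrite lagrange_identity; ring).
  set (s := (1 - y) * k / E). set (z := y * k / m). set (w := k * (1 + y) / E).
  set (c1 := y * E * A / ((1 - y) * (r * r))). set (c2 := (1 - w * k / A) / y).
  set (P0 := vadd P1 a). set (P3 := vadd P0 e). set (P2 := vadd P1 (vscale lam (rot90 a))).
  exists (vadd P0 (vscale s (vsub P3 P0))), (vadd P0 (vscale (1 - y) (vsub P1 P0))),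
    (vadd P1 (vscale z (vsub P2 P1))), (vadd P0 (vscale w (vsub P3 P0))).
  assert (Hr : 0 < r * r) by nra.
  assert (Hs : 0 < s < 1) by (split; [apply Rdiv_lt_0_compat | apply div_lt_1]; nra).
  assert (Hz : 0 < z < 1) by (split; [apply Rdiv_lt_0_compat | apply div_lt_1]; nra).
  assert (Hw : 0 < w < 1) by (split; [apply Rdiv_lt_0_compat | apply div_lt_1]; nra).
  assert (Hc1 : 0 < c1) by (apply Rdiv_lt_0_compat; apply Rmult_lt_0_compat; nra).
  assert (Hc2 : 0 < c2).
  { unfold c2. apply Rdiv_lt_0_compat; [| lra].
    assert (w * k / A < 1); [| lra].
    apply div_lt_1; [exact HA |].
    assert (HwE : w * k * E = k * k * (1 + y)) by (unfold w; field; lra).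
    apply Rmult_lt_reg_r with E; nra. }
  assert (Hlam : lam <> 0) by (intro H0; unfold m in Hm; rewrite H0 in Hm; lra).
  assert (Hr0 : r <> 0) by (intro H0; rewrite H0 in Hr; lra).
  assert (Hlam2 : 0 < lam * lam) by (destruct (Rdichotomy _ _ Hlam); nra).
  assert (Hy0 : 1 - y <> 0) by lra.
  split; [exists s; auto | split; [exists (1 - y); split; [lra | reflexivity] |]].
  split; [exists z; auto | split; [exists w; auto |]].
  split; [| split; [| split]];
    [| | exists c1; split; [exact Hc1 |] | exists c2; split; [exact Hc2 |]];
    unfold c1, c2, P0, P2, P3, s, z, w, m, A, E, k, r in *;
    clear - HA HE Hlam Hlam2 Hr0 Hy0 Hy;
    destruct P1, a as [a1 a2], e as [e1 e2];
    unfold reflect, rot90, dot, cross, vadd, vsub, vscale in *; simpl in *;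
    try f_equal; field; repeat split; try lra; apply Rgt_not_eq; nra.
Qed.

Lemma exists_small_param a1 b1 a2 b2 a3 b3 :
  0 < a1 -> 0 < b1 -> 0 < a2 -> 0 < b2 -> 0 < a3 -> 0 < b3 ->
  exists y, 0 < y < 1 /\ y * a1 < b1 /\ y * a2 < b2 /\ y * a3 < b3.
Proof.
  intros Ha1 Hb1 Ha2 Hb2 Ha3 Hb3.
  assert (Hbound : forall a b Q, 0 < a -> 0 < b -> 0 < Q -> a / b < Q -> / Q * a < b).
  { intros a b Q Ha Hb HQ H.
    apply Rmult_lt_reg_l with Q; [exact HQ |].
    rewrite <- Rmult_assoc, Rinv_r, Rmult_1_l by lra.
    replace a with (a / b * b) by (field; lra).
    apply Rmult_lt_compat_r; assumption. }
  assert (0 < a1 / b1) by (apply Rdiv_lt_0_compat; assumption).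
  assert (0 < a2 / b2) by (apply Rdiv_lt_0_compat; assumption).
  assert (0 < a3 / b3) by (apply Rdiv_lt_0_compat; assumption).
  set (Q := 2 + a1 / b1 + a2 / b2 + a3 / b3).
  assert (HQ : 2 < Q) by (unfold Q; lra).
  exists (/ Q). split; [split |].
  - apply Rinv_0_lt_compat. lra.
  - rewrite <- Rinv_1. apply Rinv_lt_contravar; lra.
  - split; [| split]; apply Hbound; unfold Q; lra.
Qed.

Lemma corner_orbit_exists P0 P1 P2 P3 :
  dot (vsub P0 P1) (vsub P2 P1) = 0 -> 0 < dot (vsub P1 P0) (vsub P3 P0) ->
  0 < dot (vsub P3 P0) (vsub P2 P1) -> 0 < dot (vsub P3 P0) (vsub P3 P1) ->
  exists X Y Z W, corner_orbit P0 P1 P2 P3 X Y Z W.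
Proof.
  intros Hperp Hk Hm Hn.
  set (a := vsub P0 P1) in *. set (e := vsub P3 P0).
  replace (dot (vsub P1 P0) (vsub P3 P0)) with (- dot a e) in Hk
    by (unfold a, e; destruct P0, P1; unfold dot, vsub; simpl; ring).
  assert (Ha : 0 < dot a a).
  { apply dot_self_pos. intros Hz. rewrite Hz in Hk. unfold dot in Hk; simpl in Hk. lra. }
  set (lam := cross a (vsub P2 P1) / dot a a).
  assert (E2 : P2 = vadd P1 (vscale lam (rot90 a)))
    by (unfold lam; rewrite <- (perp_rot90 a _ Ha Hperp); symmetry; apply vadd_vsub).
  assert (E0 : P0 = vadd P1 a) by (symmetry; apply vadd_vsub).
  assert (E3 : P3 = vadd P0 e) by (symmetry; apply vadd_vsub).
  replace (dot (vsub P3 P0) (vsub P2 P1)) with (lam * cross a e) in Hm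
    by (rewrite E2 at 1; fold e; destruct a, e, P1;
        unfold dot, cross, rot90, vadd, vsub, vscale; simpl; ring).
  replace (dot (vsub P3 P0) (vsub P3 P1)) with (dot e e - - dot a e) in Hn
    by (unfold a, e; destruct P0, P1, P3; unfold dot, vsub; simpl; ring).
  assert (Hr : 0 < cross a e * cross a e).
  { destruct (Rtotal_order (cross a e) 0) as [H | [H | H]]; [nra | | nra].
    rewrite H, Rmult_0_r in Hm. lra. }
  destruct (exists_small_param (- dot a e) (lam * cross a e) (- dot a e) (dot e e - - dot a e)
              (- dot a e * - dot a e) (cross a e * cross a e))
    as (y & Hy & Hym & Hyn & Hyr); try assumption.
  - apply Rmult_lt_0_compat; assumption.
  - rewrite E3, E2, E0.
    apply (corner_orbit_of_small_param P1 a e lam y); assumption.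
Qed.

(** * Convex quadrilaterals *)

Definition side_fn (q : quad) (i : nat) (P : pt) : R :=
  cross (vsub (vtx q (i + 1)) (vtx q i)) (vsub P (vtx q i)).

Definition ccw_convex (q : quad) : Prop :=
  forall i, (i < 4)%nat ->
    0 < side_fn q i (vtx q (i + 2)) /\ 0 < side_fn q i (vtx q (i + 3)).

Lemma side_fn_affine q i X Y t :
  side_fn q i (vadd X (vscale t (vsub Y X))) =
  (1 - t) * side_fn q i X + t * side_fn q i Y.
Proof.
  unfold side_fn. destruct (vtx q i), (vtx q (i + 1)), X, Y.
  unfold cross, vsub, vadd, vscale; simpl; ring.
Qed.

Definition is_side (q : quad) (j : nat) (U V : pt) : Prop :=
  (vtx q j = U /\ vtx q (j + 1) = V) \/ (vtx q j = V /\ vtx q (j + 1) = U).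

Lemma open_side_of_is_side q j U V P : is_side q j U V ->
  in_open_segment U V P -> in_open_segment (vtx q j) (vtx q (j + 1)) P.
Proof. intros [[-> ->] | [-> ->]]; auto using in_open_segment_sym. Qed.

Lemma reflect_is_side q j U V w : is_side q j U V ->
  reflect (vsub (vtx q (j + 1)) (vtx q j)) w = reflect (vsub V U) w.
Proof. intros [[-> ->] | [-> ->]]; [reflexivity | apply reflect_opp_axis]. Qed.

Lemma mod_succ n i : (S i mod n = S (i mod n) mod n)%nat.
Proof.
  replace (S i) with (i + 1)%nat by lia. replace (S (i mod n)) with (i mod n + 1)%nat by lia.
  symmetry. apply Nat.Div0.add_mod_idemp_l.
Qed.

Section ConvexQuad.

Variable q : quad.
Hypothesis q_convex : ccw_convex q.

Lemma side_fn_open_side i j P : (i < 4)%nat -> (j < 4)%nat ->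
  in_open_segment (vtx q j) (vtx q (j + 1)) P ->
  0 <= side_fn q i P /\ (i <> j -> 0 < side_fn q i P).
Proof.
  intros Hi Hj (t & Ht & ->). rewrite side_fn_affine.
  pose proof (q_convex i Hi) as [H2 H3]. revert H2 H3.
  destruct i as [|[|[|[|i]]]]; [| | | | lia];
  destruct j as [|[|[|[|j]]]]; try lia;
  unfold side_fn, vtx; simpl; rewrite ?cross_vsub_self, ?cross_self;
  intros; split; intros; try lia; nra.
Qed.

Lemma interior_of_side_fn_pos P :
  (forall i, (i < 4)%nat -> 0 < side_fn q i P) -> in_interior q P.
Proof.
  intros H.
  pose proof (H 0%nat ltac:(lia)) as F0. pose proof (H 1%nat ltac:(lia)) as F1.
  pose proof (H 2%nat ltac:(lia)) as F2. pose proof (H 3%nat ltac:(lia)) as F3.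
  pose proof (q_convex 0%nat ltac:(lia)) as [C0 _].
  pose proof (q_convex 1%nat ltac:(lia)) as [_ C1].
  unfold in_interior.
  set (g := cross (vsub (qC q) (qA q)) (vsub P (qA q))).
  destruct (Rtotal_order g 0) as [Hg | [Hg | Hg]].
  - left. left. revert F0 F1 Hg. unfold side_fn, vtx, g; simpl.
    destruct (qA q), (qB q), (qC q), P; unfold cross, vsub; simpl.
    intros; repeat split; lra.
  - right; right.
    assert (Hu : 0 < dot (vsub (qC q) (qA q)) (vsub (qC q) (qA q))).
    { apply dot_self_pos. intros Hz.
      unfold side_fn, vtx in C0; simpl in C0. rewrite Hz in C0.
      unfold cross in C0; simpl in C0. lra. }
    pose proof (on_line_of_cross0 (qA q) (qC q) P Hu Hg) as HP.
    set (t := dot _ _ / _) in HP.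
    exists t. split; [| exact HP].
    pose proof (side_fn_affine q 0 (qA q) (qC q) t) as E0.
    pose proof (side_fn_affine q 1 (qA q) (qC q) t) as E1.
    rewrite <- HP in E0, E1.
    revert F0 F1 C0 C1 E0 E1. unfold side_fn, vtx; simpl.
    rewrite cross_vsub_self, cross_self. intros. split; nra.
  - right; left. left. revert F2 F3 Hg. unfold side_fn, vtx, g; simpl.
    intros; repeat split; lra.
Qed.

Lemma chord_in_interior j k X Y t : (j < 4)%nat -> (k < 4)%nat -> j <> k ->
  in_open_segment (vtx q j) (vtx q (j + 1)) X ->
  in_open_segment (vtx q k) (vtx q (k + 1)) Y -> 0 < t < 1 ->
  in_interior q (vadd X (vscale t (vsub Y X))).
Proof.
  intros Hj Hk Hjk HX HY Ht. apply interior_of_side_fn_pos.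
  intros i Hi. rewrite side_fn_affine.
  destruct (side_fn_open_side i j X Hi Hj HX) as [X0 X1].
  destruct (side_fn_open_side i k Y Hi Hk HY) as [Y0 Y1].
  destruct (Nat.eq_dec i j) as [-> | Hij].
  - specialize (Y1 Hjk). nra.
  - specialize (X1 Hij). nra.
Qed.

Lemma billiard_of_corner_orbit P0 P1 P2 P3 X Y Z W j0 j1 j3 :
  (j0 < 4)%nat -> (j1 < 4)%nat -> (j3 < 4)%nat -> j0 <> j1 -> j1 <> j3 -> j3 <> j0 ->
  is_side q j0 P0 P1 -> is_side q j1 P1 P2 -> is_side q j3 P0 P3 ->
  corner_orbit P0 P1 P2 P3 X Y Z W -> has_periodic_billiard_path q.
Proof.
  intros Hj0 Hj1 Hj3 D01 D13 D30 S0 S1 S3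
    (HX & HY & HZ & HW & PX & PW & (c1 & Hc1 & R1) & (c2 & Hc2 & R2)).
  apply (open_side_of_is_side q j3) in HX, HW; [| assumption ..].
  apply (open_side_of_is_side q j0) in HY; [| assumption].
  apply (open_side_of_is_side q j1) in HZ; [| assumption].
  rewrite <- (reflect_is_side q j0 _ _ _ S0) in R1.
  rewrite <- (reflect_is_side q j1 _ _ _ S1) in R2.
  exists 6%nat, (fun i => nth (i mod 6) [X; Y; Z; W; Z; Y] X),
    (fun i => nth (i mod 6) [j3; j0; j1; j3; j1; j0] 0%nat).
  split; [lia | split; [| split; [| split]]].
  - intro i. replace (i + 6)%nat with (i + 1 * 6)%nat by lia.
    rewrite Nat.Div0.mod_add. split; reflexivity.
  - intro i. assert (Hr : (i mod 6 < 6)%nat) by (apply Nat.mod_upper_bound; lia).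
    destruct (i mod 6) as [|[|[|[|[|[|r]]]]]]; [..| lia]; simpl; split; assumption.
  - intros i t Ht. rewrite mod_succ.
    assert (Hr : (i mod 6 < 6)%nat) by (apply Nat.mod_upper_bound; lia).
    destruct (i mod 6) as [|[|[|[|[|[|r]]]]]]; [..| lia]; simpl;
      (eapply chord_in_interior; [..| eassumption | eassumption | exact Ht]; auto).
  - intro i. rewrite (mod_succ 6 (S i)), (mod_succ 6 i).
    assert (Hr : (i mod 6 < 6)%nat) by (apply Nat.mod_upper_bound; lia).
    destruct (i mod 6) as [|[|[|[|[|[|r]]]]]]; [..| lia]; simpl.
    + exists c1. split; assumption.
    + exists c2. split; assumption.
    + exists 1. split; [lra |].
      rewrite (reflect_is_side q j3 _ _ _ S3). apply reflect_law_perp. exact PW.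
    + exists (1 / c2). split; [apply Rdiv_lt_0_compat; lra |].
      apply reflect_law_reverse; assumption.
    + exists (1 / c1). split; [apply Rdiv_lt_0_compat; lra |].
      apply reflect_law_reverse; assumption.
    + exists 1. split; [lra |].
      rewrite (reflect_is_side q j3 _ _ _ S3). apply reflect_law_perp.
      transitivity (- dot (vsub Y X) (vsub P3 P0)); [| rewrite PX; ring].
      destruct X, Y, P0, P3; unfold dot, vsub; simpl; ring.
Qed.

Lemma billiard_of_right_corner P0 P1 P2 P3 j0 j1 j3 :
  (j0 < 4)%nat -> (j1 < 4)%nat -> (j3 < 4)%nat -> j0 <> j1 -> j1 <> j3 -> j3 <> j0 ->
  is_side q j0 P0 P1 -> is_side q j1 P1 P2 -> is_side q j3 P0 P3 ->
  dot (vsub P0 P1) (vsub P2 P1) = 0 -> 0 < dot (vsub P1 P0) (vsub P3 P0) ->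
  0 < dot (vsub P3 P0) (vsub P2 P1) -> 0 < dot (vsub P3 P0) (vsub P3 P1) ->
  has_periodic_billiard_path q.
Proof.
  intros Hj0 Hj1 Hj3 D01 D13 D30 S0 S1 S3 Hperp Hk Hm Hn.
  destruct (corner_orbit_exists P0 P1 P2 P3 Hperp Hk Hm Hn) as (X & Y & Z & W & Horb).
  exact (billiard_of_corner_orbit P0 P1 P2 P3 X Y Z W j0 j1 j3
           Hj0 Hj1 Hj3 D01 D13 D30 S0 S1 S3 Horb).
Qed.

End ConvexQuad.

(** * Quadrilaterals with diagonal [0, 1] *)

Lemma near_diagonal_height x y :
  near_diagonal x y -> near_diagonal (1 - x) y -> 1 / 12 < y * y.
Proof.
  intros (_ & _ & H0) (_ & _ & H1).
  pose proof (Rle_0_sqr (2 * x - 1)). unfold Rsqr in *. lra.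
Qed.

(* With A = 0 and C = 1, a right angle at B puts B on the Thales circle over AC,
   so b2^2 = b1 - b1^2; with the PI/12 bounds this gives 1/4 < b1 < 3/4 and
   b2^2 >= 3/16, hence -b2 d2 > 1/8. *)
Lemma thales_dot_pos b1 b2 d1 d2 :
  near_diagonal b1 b2 -> 1 / 12 < d2 * d2 -> b2 * d2 < 0 ->
  b1 * b1 - b1 + b2 * b2 = 0 -> 0 < d1 * (d1 - b1) + d2 * (d2 - b2).
Proof.
  intros (Hb1 & Hb2 & Hb3) Hd Hs Hc.
  assert (B1 : 1 / 4 < b1) by nra.
  assert (B2 : b1 < 3 / 4) by nra.
  assert (Bb : 3 / 16 <= b2 * b2)
    by (assert (0 < (b1 - 1 / 4) * (3 / 4 - b1)) by (apply Rmult_lt_0_compat; lra); nra).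
  assert (BD : 1 / 8 < - (b2 * d2)) by nra.
  pose proof (Rle_0_sqr (d1 - b1 / 2)). unfold Rsqr in *.
  nra.
Qed.

Section NormalQuad.

Variables b1 b2 d1 d2 : R.
Hypothesis B_near : near_diagonal b1 b2.
Hypothesis D_near : near_diagonal d1 d2.
Hypothesis B_near' : near_diagonal (1 - b1) b2.
Hypothesis D_near' : near_diagonal (1 - d1) d2.
Hypothesis B_below : b2 < 0.
Hypothesis D_above : 0 < d2.

Let A : pt := (0, 0).
Let B : pt := (b1, b2).
Let C : pt := (1, 0).
Let D : pt := (d1, d2).
Let q := nquad B D.

Ltac coords := unfold A, B, C, D, dot, cross, vsub in *; simpl in *.
Ltac arith := unfold near_diagonal in *; coords; nra.
Ltac side := unfold is_side, q, nquad, vtx; simpl;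
  first [left; split; reflexivity | right; split; reflexivity].

Lemma nquad_convex : ccw_convex q.
Proof.
  intros i Hi. destruct i as [|[|[|[|i]]]]; [.. | lia];
    unfold side_fn, q, nquad, vtx; simpl; split; arith.
Qed.

Lemma nquad_right_at_A :
  vangle q 0 = PI / 2 -> vangle q 1 < PI / 2 \/ vangle q 3 < PI / 2 ->
  has_periodic_billiard_path q.
Proof.
  unfold vangle, param1, param2, q, nquad, vtx; simpl. intros Hr Ha.
  apply dot_eq0_of_right_angle_sum in Hr; [| arith ..].
  destruct Ha as [Ha | Ha]; apply dot_pos_of_acute_angle in Ha; try arith.
  - apply (billiard_of_right_corner q nquad_convex B A D C 0 3 1); try lia; try side; arith.
  - apply (billiard_of_right_corner q nquad_convex D A B C 3 0 2); try lia; try side; arith.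
Qed.

Lemma nquad_right_at_B :
  vangle q 1 = PI / 2 -> vangle q 2 < PI / 2 \/ vangle q 0 < PI / 2 ->
  has_periodic_billiard_path q.
Proof.
  unfold vangle, param1, param2, param3, param4, q, nquad, vtx; simpl. intros Hr Ha.
  apply dot_eq0_of_right_angle in Hr; [| arith ..].
  assert (Hthales : b1 * b1 - b1 + b2 * b2 = 0) by (coords; lra).
  pose proof (near_diagonal_height _ _ D_near D_near') as D_high.
  destruct Ha as [Ha | Ha]; apply dot_pos_of_acute_angle_sum in Ha; try arith.
  - pose proof (thales_dot_pos (1 - b1) b2 (1 - d1) d2 B_near' D_high ltac:(nra) ltac:(lra)).
    apply (billiard_of_right_corner q nquad_convex C B A D 1 0 2); try lia; try side; arith.
  - pose proof (thales_dot_pos b1 b2 d1 d2 B_near D_high ltac:(nra) Hthales).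
    apply (billiard_of_right_corner q nquad_convex A B C D 0 1 3); try lia; try side; arith.
Qed.

Lemma nquad_right_at_C :
  vangle q 2 = PI / 2 -> vangle q 3 < PI / 2 \/ vangle q 1 < PI / 2 ->
  has_periodic_billiard_path q.
Proof.
  unfold vangle, param3, param4, q, nquad, vtx; simpl. intros Hr Ha.
  apply dot_eq0_of_right_angle_sum in Hr; [| arith ..].
  destruct Ha as [Ha | Ha]; apply dot_pos_of_acute_angle in Ha; try arith.
  - apply (billiard_of_right_corner q nquad_convex D C B A 2 1 3); try lia; try side; arith.
  - apply (billiard_of_right_corner q nquad_convex B C D A 1 2 0); try lia; try side; arith.
Qed.

Lemma nquad_right_at_D :
  vangle q 3 = PI / 2 -> vangle q 4 < PI / 2 \/ vangle q 6 < PI / 2 ->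
  has_periodic_billiard_path q.
Proof.
  unfold vangle, param1, param2, param3, param4, q, nquad, vtx; simpl. intros Hr Ha.
  apply dot_eq0_of_right_angle in Hr; [| arith ..].
  assert (Hthales : d1 * d1 - d1 + d2 * d2 = 0) by (coords; lra).
  pose proof (near_diagonal_height _ _ B_near B_near') as B_high.
  destruct Ha as [Ha | Ha]; apply dot_pos_of_acute_angle_sum in Ha; try arith.
  - pose proof (thales_dot_pos d1 d2 b1 b2 D_near B_high ltac:(nra) Hthales).
    apply (billiard_of_right_corner q nquad_convex A D C B 3 2 0); try lia; try side; arith.
  - pose proof (thales_dot_pos (1 - d1) d2 (1 - b1) b2 D_near' B_high ltac:(nra) ltac:(lra)).
    apply (billiard_of_right_corner q nquad_convex C D A B 2 3 1); try lia; try side; arith.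
Qed.

End NormalQuad.

Lemma nquad_billiard b d : snd b < 0 < snd d ->
  near_square (PI / 12) (nquad b d) -> right_adj_acute (nquad b d) ->
  has_periodic_billiard_path (nquad b d).
Proof.
  destruct b as [b1 b2], d as [d1 d2]; simpl.
  intros [Hb2 Hd2] (N1 & N2 & N3 & N4) (k & Hk & Hr & Ha).
  unfold param1, param2, param3, param4, nquad in N1, N2, N3, N4; simpl in N1, N2, N3, N4.
  apply near_diagonal_of_angle in N1, N2, N3, N4;
    try (apply dot_self_pos; unfold vsub; simpl; intros Hz; injection Hz; lra).
  assert (B_near : near_diagonal b1 b2)
    by (apply (near_diagonal_eq _ _ _ _ N1); unfold dot, cross, vsub; simpl; ring).
  assert (D_near : near_diagonal d1 d2)
    by (apply (near_diagonal_eq _ _ _ _ N2); unfold dot, cross, vsub; simpl; ring).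
  assert (B_near' : near_diagonal (1 - b1) b2)
    by (apply (near_diagonal_eq _ _ _ _ N3); unfold dot, cross, vsub; simpl; ring).
  assert (D_near' : near_diagonal (1 - d1) d2)
    by (apply (near_diagonal_eq _ _ _ _ N4); unfold dot, cross, vsub; simpl; ring).
  destruct k as [|[|[|[|k]]]]; [.. | lia].
  - apply nquad_right_at_A; assumption.
  - apply nquad_right_at_B; assumption.
  - apply nquad_right_at_C; assumption.
  - apply nquad_right_at_D; assumption.
Qed.

Theorem proposition3p3p1 (q : quad) :
  is_quadrilateral q ->
  near_square (PI / 12) q ->
  right_adj_acute q ->
  has_periodic_billiard_path q.
Proof.
  intros Hq Hnear Hright.
  destruct (quad_normal_form q Hq) as (O & u & v & b & d & Huv & Hvv & Hu & Hbd & ->).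
  apply billiard_sim; try assumption.
  apply nquad_billiard.
  - exact Hbd.
  - exact (near_square_sim O u v Huv Hvv Hu _ _ Hnear).
  - exact (right_adj_acute_sim O u v Huv Hvv Hu _ Hright).
Qed.
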